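(* Let $H_3(\mathbb{Z})=\langle x,y,z\mid [x,y]=z,\ z\text{ central}\rangle$ be the $3$-dimensional integral Heisenberg group and let $p$ be a prime. If $\pi:H_3(\mathbb{Z})\to Q$ is a surjective homomorphism onto a finite $q$-group $Q$, where $q$ is a prime distinct from $p$, then $\pi(x^p)$ and $\pi(x^pz^m)$ are conjugate in $Q$ for every natural number $m$.
   Context: $[a,b]=aba^{-1}b^{-1}$. *)

From mathcomp Require Import all_boot all_order all_algebra all_fingroup all_solvable.
Set Implicit Arguments. Unset Strict Implicit. Unset Printing Implicit Defensive.
Import GRing.Theory Num.Theory.
Local Open Scope ring_scope.

(* The integral Heisenberg group H_3(Z), realized concretely as triples
   (a,b,c) of integers, corresponding to upper unitriangular matrices
   [[1,a,c],[0,1,b],[0,0,1]], with multiplication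
   (a,b,c)(a',b',c') = (a+a', b+b', c+c'+a*b'). *)
Definition heis := (int * int * int)%type.

Definition heis_mul (g h : heis) : heis :=
  let: (a, b, c) := g in let: (a', b', c') := h in
  (a + a', b + b', c + c' + a * b').

Definition heis_one : heis := (0, 0, 0).

Definition heis_inv (g : heis) : heis :=
  let: (a, b, c) := g in (- a, - b, - c + a * b).

Fixpoint heis_exp (g : heis) (n : nat) : heis :=
  match n with
  | O => heis_one
  | S k => heis_mul g (heis_exp g k)
  end.

Definition heis_comm (g h : heis) : heis :=
  heis_mul (heis_mul (heis_mul g h) (heis_inv g)) (heis_inv h).

Definition hx : heis := (1, 0, 0).
Definition hy : heis := (0, 1, 0).
Definition hz : heis := (0, 0, 1).

Lemma heis_comm_xy : heis_comm hx hy = hz.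
Proof. by rewrite /heis_comm /= !mulr0 !mul0r !addr0 ?add0r ?mulr1 ?subrr. Qed.

From mathcomp Require Import all_boot all_order all_algebra all_fingroup all_solvable.
From mathcomp Require Import zify.
Set Implicit Arguments. Unset Strict Implicit. Unset Printing Implicit Defensive.
Local Open Scope ring_scope.

(* In H_3(Z) one has x^a y^b = y^b x^a z^(ab), so conjugating x^p by y^b
   multiplies it by z^(pb).  In a finite q-group the order of pi(z) is a power
   of q, hence prime to p, so pi(z)^m is a power of pi(z)^p, i.e. equal to
   pi(z)^(pb) for a suitable b. *)

Lemma heis_exp_x n : heis_exp hx n = (n%:Z, 0, 0).
Proof. by elim: n => [|n IHn] //=; rewrite IHn /=; congr (_, _, _); lia. Qed.

Lemma heis_exp_y n : heis_exp hy n = (0, n%:Z, 0).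
Proof. by elim: n => [|n IHn] //=; rewrite IHn /=; congr (_, _, _); lia. Qed.

Lemma heis_exp_z n : heis_exp hz n = (0, 0, n%:Z).
Proof. by elim: n => [|n IHn] //=; rewrite IHn /=; congr (_, _, _); lia. Qed.

Lemma heis_mul_exp_xy a b :
  heis_mul (heis_exp hx a) (heis_exp hy b) =
  heis_mul (heis_exp hy b) (heis_mul (heis_exp hx a) (heis_exp hz (a * b))).
Proof. by rewrite heis_exp_x heis_exp_y heis_exp_z /=; congr (_, _, _); lia. Qed.

Local Open Scope group_scope.

Section HeisenbergMorphism.

Variables (gT : finGroupType) (pi : heis -> gT).
Hypothesis pi_mul : {morph pi : g h / heis_mul g h >-> g * h}.

Lemma pi_one : pi heis_one = 1.
Proof. by apply: (mulgI (pi heis_one)); rewrite -pi_mul mulg1. Qed.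

Lemma pi_exp g n : pi (heis_exp g n) = pi g ^+ n.
Proof. by elim: n => [|n IHn] /=; rewrite ?pi_one // pi_mul IHn expgS. Qed.

Lemma pi_conj_exp_xy a b :
  pi (heis_exp hx a) ^ pi (heis_exp hy b) = pi (heis_exp hx a) * pi hz ^+ (a * b).
Proof.
by rewrite /conjg -pi_mul heis_mul_exp_xy pi_mul mulKg pi_mul (pi_exp hz).
Qed.

End HeisenbergMorphism.

Lemma coprime_order_pgroup (gT : finGroupType) (G : {group gT}) p q x :
  prime p -> p != q -> q.-group G -> x \in G -> coprime p #[x].
Proof.
move=> p_pr p_neq_q qG Gx; rewrite coprime_sym.
apply: (pnat_coprime (mem_p_elt qG Gx)).
by rewrite pnatE // inE /=.
Qed.

Lemma mem_cycleX_coprime (gT : finGroupType) (x : gT) k m :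
  coprime k #[x] -> x ^+ m \in <[x ^+ k]>.
Proof.
rewrite coprime_sym -generator_coprime => /eqP <-.
exact: mem_cycle.
Qed.

Theorem mainTheorem18 (p q : nat) (gT : finGroupType) (Q : {group gT})
    (pi : heis -> gT) :
  prime p -> prime q -> q != p -> q.-group Q ->
  (forall g h : heis, pi (heis_mul g h) = pi g * pi h) ->
  (forall g : heis, pi g \in Q) ->
  (forall u : gT, u \in Q -> exists g : heis, pi g = u) ->
  forall m : nat,
    exists2 t : gT, t \in Q &
      pi (heis_exp hx p) ^ t = pi (heis_mul (heis_exp hx p) (heis_exp hz m)).
Proof.
move=> p_pr _ q_neq_p qQ pi_mul piQ _ m.
have p_coprime_z : coprime p #[pi hz].
  by apply: coprime_order_pgroup qQ (piQ hz); rewrite // eq_sym.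
have /cycleP[b zm_eq] := mem_cycleX_coprime m p_coprime_z.
exists (pi (heis_exp hy b)); first exact: piQ.
by rewrite pi_conj_exp_xy // pi_mul (pi_exp pi_mul hz) zm_eq -expgM.
Qed.
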